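(* For every $n\in\mathbb Z$, $R_{1,n}$ is a Laurent polynomial in $R_{1,0},\dots,R_{r,0},R_{1,1},\dots,R_{r,1}$ with nonnegative integer coefficients.
   Context: Fix $r\ge1$, $I_r=\{1,\dots,r\}$. Let $R_{1,0},\dots,R_{r,0},R_{1,1},\dots,R_{r,1}$ be algebraically independent indeterminates over $\mathbb Q$ and $(R_{\alpha,n})_{0\le\alpha\le r+1,n\in\mathbb Z}$ the $A_r$ $Q$-system: the unique family of nonzero elements of $\mathbb Q(R_{1,0},\dots,R_{r,1})$ with these initial values, $R_{0,n}=R_{r+1,n}=1$, and $R_{\alpha,n+1}R_{\alpha,n-1}=R_{\alpha,n}^2+R_{\alpha+1,n}R_{\alpha-1,n}$ ($\alpha\in I_r$, $n\in\mathbb Z$). *)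

From HB Require Import structures.
From mathcomp Require Import all_boot all_order all_algebra.
From mathcomp Require Import fraction.
Set Implicit Arguments. Unset Strict Implicit. Unset Printing Implicit Defensive.
Import Order.TTheory GRing.Theory Num.Theory.
Local Open Scope ring_scope.

(* ratfun m = Q(X_0, ..., X_{m-1}), built iteratively as
   Q(X_0,...,X_{m-1}) = Frac(Q(X_0,...,X_{m-2})[X_{m-1}]). *)
Fixpoint ratfun (m : nat) : fieldType :=
  match m with
  | 0 => rat
  | m'.+1 => {fraction {poly ratfun m'}}
  end.

Definition ratfun_up (m : nat) (c : ratfun m) : ratfun m.+1 :=
  tofrac (c%:P).

(* the indeterminate X_i in ratfun m (0 when i >= m) *)
Fixpoint ratfun_var (m : nat) (i : nat) : ratfun m :=
  match m return ratfun m with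
  | 0 => 0
  | m'.+1 => if i == m' then (tofrac 'X : ratfun m'.+1)
             else ratfun_up (ratfun_var m' i)
  end.

Definition nonneg_laurent (K : unitRingType) (m : nat) (x : 'I_m -> K) (f : K)
  : Prop :=
  exists s : seq (nat * {ffun 'I_m -> int}),
    f = \sum_(t <- s) (t.1)%:R * \prod_(i < m) (x i) ^ (t.2 i).

(* The A_r Q-system: R alpha n for 0 <= alpha <= r+1, n in Z, in the field
   Q(R_{1,0},...,R_{r,0},R_{1,1},...,R_{r,1}) = ratfun (2r), where
   R_{alpha,0} is the indeterminate X_{alpha-1} and R_{alpha,1} is X_{r+alpha-1}. *)
Definition is_Ar_Qsystem (r : nat) (R : nat -> int -> ratfun (r + r)) : Prop :=
  [/\ (forall alpha, (1 <= alpha <= r)%N -> R alpha 0 = ratfun_var (r + r) alpha.-1),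
      (forall alpha, (1 <= alpha <= r)%N -> R alpha 1 = ratfun_var (r + r) (r + alpha.-1)),
      (forall n, R 0%N n = 1 /\ R r.+1 n = 1),
      (forall alpha n, (1 <= alpha <= r)%N -> R alpha n != 0) &
      (forall alpha n, (1 <= alpha <= r)%N ->
         R alpha (n + 1) * R alpha (n - 1) = R alpha n ^+ 2 + R alpha.+1 n * R alpha.-1 n)].

Definition Qsys_vars (r : nat) (i : 'I_(r + r)) : ratfun (r + r) :=
  ratfun_var (r + r) i.
Arguments is_Ar_Qsystem r R : clear implicits.
Arguments Qsys_vars r i : clear implicits.
Arguments nonneg_laurent K m x f : clear implicits.

From HB Require Import structures.
From mathcomp Require Import all_boot all_order all_algebra.
From mathcomp Require Import fraction.
From mathcomp Require Import ring zify.
Set Implicit Arguments. Unset Strict Implicit. Unset Printing Implicit Defensive.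
Import GRing.Theory.
Local Open Scope ring_scope.

(* For two consecutive time slices a = R_{.,n}, b = R_{.,n+1} put
     x_i = b_{i+1} a_i / (a_{i+1} b_i),  z_i = b_{i+2} a_i / (a_{i+1} b_{i+1})  (z_r = 0),
   let U(a,b) be the upper bidiagonal (r+1)x(r+1) matrix with diagonal x and
   superdiagonal z, L the lower triangular matrix of ones, K(a,b) = U L, H(a,b) = L U.
   With c = R_{.,n+2}, the Q-system relation is equivalent to the intertwining
     K(a,b) D = D H(b,c),   D = diag(x_i + z_i);
   as H^(k+1) = L K^k U and row 0 of L, column 0 of U are trivial, this yields
     (K(a,b)^(k+1))_00 = x_0(b,c) (K(b,c)^k)_00,
   hence R_{1,n+1+k} = R_{1,n+1} (K(R_{.,n}, R_{.,n+1})^k)_00.  For n = 0 every entry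
   of K is a sum of Laurent monomials in the initial variables, so R_{1,1+k} is a
   nonnegative Laurent polynomial; the indices n <= 0 follow by applying the same
   result to the time-reversed system t |-> 1 - t, whose two initial slices are the
   original ones swapped. *)

Lemma exprS_shift (T : ringType) (u v : T) k : (u * v) ^+ k.+1 = u * (v * u) ^+ k * v.
Proof.
elim: k => [|k IHk]; first by rewrite expr1 expr0 mulr1.
by rewrite exprS IHk [in RHS]exprS !mulrA.
Qed.

Section TransferMatrices.
Variables (F : fieldType) (r : nat).
Implicit Types (a b : nat -> F).

Definition diag_wt a b i : F := b i.+1 * a i / (a i.+1 * b i).
Definition sup_wt a b i : F :=
  if (i < r)%N then b i.+2 * a i / (a i.+1 * b i.+1) else 0.

Definition Umx a b : 'M[F]_r.+1 :=
  \matrix_(i, j) (diag_wt a b i *+ (j == i :> nat) + sup_wt a b i *+ (j == i.+1 :> nat)).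
Definition Lmx : 'M[F]_r.+1 := \matrix_(i, j) (j <= i)%:R.

Definition wt_row a b : 'rV[F]_r.+1 := \row_j (diag_wt a b j + sup_wt a b j).

Definition Kmx a b : 'M[F]_r.+1 := Umx a b *m Lmx.
Definition Hmx a b : 'M[F]_r.+1 := Lmx *m Umx a b.

Lemma sum_ord_eq (G : 'I_r.+1 -> F) (l : nat) :
  \sum_(k < r.+1) G k *+ (k == l :> nat) = if (l < r.+1)%N then G (inord l) else 0.
Proof.
case: ifP => [lr|/negbT lr].
  rewrite (bigD1 (inord l)) //= inordK // eqxx big1 ?addr0 // => k kl.
  by rewrite (_ : (k == l :> nat) = false) //; apply: contraNF kl => /eqP <-; rewrite inord_val.
by rewrite big1 // => k _; case: eqP lr => // <-; rewrite ltn_ord.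
Qed.

Lemma Kmx_entry a b i j :
  Kmx a b i j = diag_wt a b i *+ (j <= i)%N + sup_wt a b i *+ (j <= i.+1)%N.
Proof.
rewrite !mxE.
under eq_bigr => k _ do rewrite !mxE mulrDl !mulrnAl.
rewrite big_split /= !sum_ord_eq ltn_ord inord_val mulr_natr.
case: ltnP => [iSr | ]; first by rewrite inordK // mulr_natr.
by rewrite ltnS /sup_wt => /leq_gtF ->; rewrite mul0rn.
Qed.

Lemma Hmx_entry a b i j :
  Hmx a b i j = (diag_wt a b j + sup_wt a b j.-1 *+ (0 < j)%N) *+ (j <= i)%N
                + sup_wt a b j.-1 *+ (j == i.+1 :> nat).
Proof.
rewrite !mxE.
under eq_bigr => k _ do rewrite !mxE mulrDr !mulrnAr (eq_sym (val j)).
rewrite big_split /= sum_ord_eq ltn_ord inord_val.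
case: j => [[|j] ltjr] /=.
  by rewrite big1 ?mul1r ?mulr0n ?addr0 // => k _; rewrite mulr0n.
rewrite (eq_bigr (fun k : 'I_r.+1 => (k <= i)%:R * sup_wt a b k *+ (k == j :> nat)))
  => [|k _]; last by rewrite eq_sym.
rewrite sum_ord_eq (ltnW ltjr) inordK ?(ltnW ltjr) // eqSS !mulr_natl mulr1n.
by case: ltngtP; rewrite ?mulr1n ?mulr0n ?addr0 ?add0r.
Qed.

Lemma Hmx_pow a b k : Hmx a b ^+ k.+1 = Lmx *m Kmx a b ^+ k *m Umx a b.
Proof. by rewrite /Hmx /Kmx !mulmxE exprS_shift. Qed.

(* Row 0 of L is e_0 and column 0 of U is x_0 e_0. *)
Lemma corner_entry a b (M : 'M[F]_r.+1) :
  (Lmx *m M *m Umx a b) ord0 ord0 = M ord0 ord0 * diag_wt a b 0.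
Proof.
have inord0 : inord 0 = ord0 :> 'I_r.+1 by apply/val_inj; rewrite /= inordK.
rewrite mxE (eq_bigr (fun k => ((Lmx *m M) ord0 k * diag_wt a b k) *+ (k == 0%N :> nat))).
  rewrite sum_ord_eq inord0 mxE (eq_bigr (fun k => M k ord0 *+ (k == 0%N :> nat))).
    by rewrite sum_ord_eq inord0.
  by move=> k _; rewrite !mxE leqn0 mulr_natl.
by move=> k _; rewrite [Umx _ _ _ _]mxE /= mulr0n addr0 eq_sym mulrnAr.
Qed.
End TransferMatrices.

Section QSystemMutation.
Variables (F : fieldType) (r : nat) (Q : nat -> int -> F).
Hypothesis Q_bound : forall n, Q 0%N n = 1 /\ Q r.+1 n = 1.
Hypothesis Q_neq0_in : forall al n, (1 <= al <= r)%N -> Q al n != 0.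
Hypothesis Q_rec : forall al n, (1 <= al <= r)%N ->
  Q al (n + 1) * Q al (n - 1) = Q al n ^+ 2 + Q al.+1 n * Q al.-1 n.

Definition slice (n : int) (al : nat) : F := Q al n.

(* The boundary values are 1, so every Q_{al,n} with al <= r+1 is nonzero. *)
Lemma Q_neq0 al n : (al <= r.+1)%N -> Q al n != 0.
Proof.
case: al => [|al] alr; first by rewrite (proj1 (Q_bound n)) oner_neq0.
case: (ltnP al r) => [ltar|ral]; first exact: Q_neq0_in.
have -> : al = r by lia.
by rewrite (proj2 (Q_bound n)) oner_neq0.
Qed.

Lemma Q_rec_shift al n : (1 <= al <= r)%N ->
  Q al (n + 2) * Q al n = Q al (n + 1) ^+ 2 + Q al.+1 (n + 1) * Q al.-1 (n + 1).
Proof. by move=> alr; rewrite -Q_rec // addrK -addrA. Qed.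

Section OneStep.
Variable n : int.
Local Notation a := (slice n).
Local Notation b := (slice (n + 1)).
Local Notation c := (slice (n + 2)).

(* The diagonal of D in closed form, computed from K(a,b) and from H(b,c);
   each computation uses the recurrence once. *)
Lemma weight_sum j : (j <= r)%N ->
  diag_wt a b j + sup_wt r a b j = Q j n * Q j.+1 (n + 2) / (Q j (n + 1) * Q j.+1 (n + 1)).
Proof.
move=> jr; rewrite /diag_wt /sup_wt /slice; case: ltnP => [jlt | rj].
  have e := @Q_rec_shift j.+1 n jlt.
  have -> : Q j.+1 (n + 2) = (Q j.+1 (n + 1) ^+ 2 + Q j.+2 (n + 1) * Q j (n + 1)) / Q j.+1 n.
    by rewrite -e mulfK // Q_neq0.
  field; rewrite !Q_neq0 //; lia.
have -> : j = r by lia.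
rewrite !(proj2 (Q_bound _)) addr0; field; rewrite !Q_neq0 //; lia.
Qed.

Lemma weight_sum_next j : (j <= r)%N ->
  diag_wt b c j + sup_wt r b c j.-1 *+ (0 < j)%N =
  Q j n * Q j.+1 (n + 2) / (Q j (n + 1) * Q j.+1 (n + 1)).
Proof.
rewrite /diag_wt /sup_wt /slice; case: j => [|j] jr /=.
  rewrite !(proj1 (Q_bound _)) addr0; field; rewrite !Q_neq0 //; lia.
have e := @Q_rec_shift j.+1 n jr.
have -> : Q j.+1 n = (Q j.+1 (n + 1) ^+ 2 + Q j.+2 (n + 1) * Q j (n + 1)) / Q j.+1 (n + 2).
  by rewrite -e [_ * Q _ n]mulrC mulfK // Q_neq0 // leqW.
rewrite jr mulr1n; field; rewrite !Q_neq0 //; lia.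
Qed.

Lemma sup_wt_next i : (i < r)%N ->
  sup_wt r a b i * (diag_wt a b i.+1 + sup_wt r a b i.+1) =
  (diag_wt a b i + sup_wt r a b i) * sup_wt r b c i.
Proof.
move=> ir; rewrite !weight_sum ?(ltnW ir) // /sup_wt ir /slice.
field; rewrite !Q_neq0 //; lia.
Qed.

Lemma Kmx_Hmx_intertwine :
  Kmx r a b *m diag_mx (wt_row r a b) = diag_mx (wt_row r a b) *m Hmx r b c.
Proof.
rewrite mul_mx_diag mul_diag_mx; apply/matrixP => i j.
rewrite [LHS]mxE [RHS]mxE Kmx_entry Hmx_entry !mxE.
have ir := ltn_ord i; have jr := ltn_ord j; rewrite !ltnS in ir jr.
rewrite weight_sum_next // -weight_sum //.
case: (leqP j i) => [ji | ij].
  by rewrite (leqW ji) ltn_eqF // !mulr1n mulr0n addr0 mulrC.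
rewrite !mulr0n !add0r.
have [-> | nji] := eqVneq (val j) i.+1.
  by rewrite leqnn !mulr1n sup_wt_next //; apply: leq_trans ij jr.
by rewrite ltn_geF ?mulr0n ?mul0r ?mulr0 // ltn_neqAle ij andbT eq_sym.
Qed.

Lemma Kmx_Hmx_intertwine_pow k :
  Kmx r a b ^+ k * diag_mx (wt_row r a b) = diag_mx (wt_row r a b) * Hmx r b c ^+ k.
Proof.
elim: k => [|k IHk]; first by rewrite !expr0 mul1r mulr1.
by rewrite exprS -mulrA IHk mulrA -!mulmxE Kmx_Hmx_intertwine !mulmxE -mulrA -exprS.
Qed.

(* One mutation step on the (0,0) entry of the powers of K; needs D_00 != 0. *)
Lemma Kmx_pow_corner k :
  (Kmx r a b ^+ k.+1) ord0 ord0 = diag_wt b c 0 * (Kmx r b c ^+ k) ord0 ord0.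
Proof.
have := congr1 (fun M : 'M[F]_r.+1 => M ord0 ord0) (Kmx_Hmx_intertwine_pow k.+1).
rewrite /= -!mulmxE mul_mx_diag mul_diag_mx !mxE Hmx_pow corner_entry.
have wt0_neq0 : diag_wt a b 0 + sup_wt r a b 0 != 0.
  by rewrite weight_sum // /slice !(mulf_eq0, invr_eq0, negb_or) !Q_neq0.
by rewrite [RHS]mulrC => /(mulIf wt0_neq0) ->; rewrite mulrC.
Qed.
End OneStep.

Lemma Q1_transfer k n :
  Q 1%N (n + 1 + k%:Z) = Q 1%N (n + 1) * (Kmx r (slice n) (slice (n + 1)) ^+ k) ord0 ord0.
Proof.
elim: k n => [|k IHk] n; first by rewrite addr0 expr0 mxE mulr1.
have -> : n + 1 + k.+1%:Z = n + 1 + 1 + k by rewrite intS !addrA.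
rewrite IHk (_ : n + 1 + 1 = n + 2); last by rewrite -addrA.
rewrite Kmx_pow_corner mulrA; congr (_ * _).
rewrite /diag_wt /slice !(proj1 (Q_bound _)); field.
by rewrite Q_neq0.
Qed.
End QSystemMutation.

Section NonnegLaurent.
Variables (K : fieldType) (m : nat) (x : 'I_m -> K).
Hypothesis x_neq0 : forall i, x i != 0.
Local Notation nnl := (nonneg_laurent K m x).

Lemma nnl_nat (c : nat) : nnl c%:R.
Proof.
exists [:: (c, [ffun => 0])]; rewrite big_seq1 big1 ?mulr1 // => i _.
by rewrite ffunE expr0z.
Qed.

Lemma nnl0 : nnl 0. Proof. exact: nnl_nat 0. Qed.
Lemma nnl1 : nnl 1. Proof. exact: nnl_nat 1. Qed.

Lemma nnl_add f g : nnl f -> nnl g -> nnl (f + g).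
Proof. by case=> s1 ->; case=> s2 ->; exists (s1 ++ s2); rewrite big_cat. Qed.

(* Products of monomials add exponents; this needs the x i to be nonzero. *)
Lemma nnl_mul f g : nnl f -> nnl g -> nnl (f * g).
Proof.
case=> s1 ->; case=> s2 ->.
exists [seq (muln t.1 u.1, [ffun i => t.2 i + u.2 i])
         | t : nat * {ffun 'I_m -> int} <- s1, u : nat * {ffun 'I_m -> int} <- s2].
rewrite big_allpairs_dep mulr_suml; apply: eq_bigr => t _.
rewrite mulr_sumr; apply: eq_bigr => u _.
under [in RHS]eq_bigr => i _ do rewrite ffunE expfzDr //.
by rewrite natrM big_split mulrACA.
Qed.

Lemma nnl_muln f c : nnl f -> nnl (f *+ c).
Proof. by move=> nnlf; rewrite -mulr_natr; apply: nnl_mul nnlf (nnl_nat c). Qed.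

Lemma nnl_var_pow i (e : int) : nnl (x i ^ e).
Proof.
exists [:: (1%N, [ffun j => if j == i then e else 0])].
rewrite big_seq1 mul1r (bigD1 i) //= ffunE eqxx big1 ?mulr1 // => j /negbTE ji.
by rewrite ffunE ji expr0z.
Qed.

Definition nnl_unit (f : K) : Prop := nnl f /\ nnl f^-1.

Lemma nnl_unit_var i : nnl_unit (x i).
Proof.
split; first by have := nnl_var_pow i 1; rewrite expr1z.
by have := nnl_var_pow i (-1); rewrite -invr_expz expr1z.
Qed.

Lemma nnl_unit1 : nnl_unit 1.
Proof. by rewrite /nnl_unit invr1; split; apply: nnl1. Qed.

Lemma nnl_sum n (G : 'I_n -> K) : (forall i, nnl (G i)) -> nnl (\sum_(i < n) G i).
Proof. by move=> nnlG; apply: big_ind => //; [exact: nnl0 | exact: nnl_add]. Qed.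

Lemma nnl_mulmx p q s (A : 'M[K]_(p, q)) (B : 'M[K]_(q, s)) :
  (forall i j, nnl (A i j)) -> (forall i j, nnl (B i j)) ->
  forall i j, nnl ((A *m B) i j).
Proof.
by move=> nnlA nnlB i j; rewrite mxE; apply: nnl_sum => k; apply: nnl_mul.
Qed.

Lemma nnl_mx_pow n (A : 'M[K]_n.+1) :
  (forall i j, nnl (A i j)) -> forall k i j, nnl ((A ^+ k) i j).
Proof.
move=> nnlA; elim=> [|k IHk] i j; first by rewrite expr0 mxE; apply: nnl_nat.
by rewrite exprSr -mulmxE; apply: nnl_mulmx.
Qed.

Lemma nnl_diag_wt (a b : nat -> K) i :
  nnl_unit (a i) -> nnl_unit (a i.+1) -> nnl_unit (b i) -> nnl_unit (b i.+1) ->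
  nnl (diag_wt a b i).
Proof.
move=> [ai _] [_ aSi] [_ bi] [bSi _]; rewrite /diag_wt invfM.
by apply: nnl_mul => //; apply: nnl_mul.
Qed.

Lemma nnl_Kmx r (a b : nat -> K) :
  (forall al, (al <= r.+1)%N -> nnl_unit (a al)) ->
  (forall al, (al <= r.+1)%N -> nnl_unit (b al)) ->
  forall i j, nnl (Kmx r a b i j).
Proof.
move=> ua ub; apply: nnl_mulmx => i j; rewrite mxE; last exact: nnl_nat.
have ir := ltn_ord i; rewrite ltnS in ir.
apply: nnl_add; apply: nnl_muln.
  by apply: nnl_diag_wt; [apply: ua | apply: ua | apply: ub | apply: ub]; lia.
rewrite /sup_wt; case: ifP => iltr; last exact: nnl0.
have [ai _] := ua i (leqW ir); have [_ aSi] := ua i.+1 (ltnW iltr).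
have [_ bSi] := ub i.+1 (ltnW iltr); have [bSSi _] := ub i.+2 iltr.
by rewrite invfM; apply: nnl_mul => //; apply: nnl_mul.
Qed.
End NonnegLaurent.

Lemma Q1_nonneg_laurent (K : fieldType) (m : nat) (x : 'I_m -> K) r (Q : nat -> int -> K) :
  (forall i, x i != 0) ->
  (forall n, Q 0%N n = 1 /\ Q r.+1 n = 1) ->
  (forall al n, (1 <= al <= r)%N -> Q al n != 0) ->
  (forall al n, (1 <= al <= r)%N ->
     Q al (n + 1) * Q al (n - 1) = Q al n ^+ 2 + Q al.+1 n * Q al.-1 n) ->
  (forall al, (al <= r.+1)%N -> nnl_unit x (Q al 0) /\ nnl_unit x (Q al 1)) ->
  forall k : nat, nonneg_laurent K m x (Q 1%N (1 + k%:Z)).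
Proof.
move=> x_neq0 Q_bound Q_neq0_in Q_rec slice_unit k.
have -> : 1 + k%:Z = 0 + 1 + k%:Z by rewrite add0r.
rewrite (Q1_transfer Q_bound Q_neq0_in Q_rec) add0r; apply: nnl_mul => //.
  by have [_ []] := slice_unit 1%N (ltn0Sn _).
apply: nnl_mx_pow => // i j; apply: nnl_Kmx => // al /slice_unit [] //.
Qed.

Lemma int_pos_or_nonpos (n : int) : exists k : nat, n = 1 + k%:Z \/ n = - k%:Z.
Proof.
case: n => [[|k]|k]; first by exists 0%N; right.
  by exists k; left; rewrite intS.
by exists k.+1; right; rewrite NegzE.
Qed.

Section ArQsystem.
Variables (r : nat) (R : nat -> int -> ratfun (r + r)).
Hypothesis hR : is_Ar_Qsystem r R.

Lemma Qsys_vars_neq0 i : Qsys_vars r i != 0.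
Proof.
case: hR => R0 R1 _ Rnz _; case: (ltnP i r) => ir.
  by have := Rnz i.+1 0 ir; rewrite R0.
have alr : (1 <= (i - r).+1 <= r)%N by have := ltn_ord i; lia.
by have := Rnz _ 1 alr; rewrite R1 //= subnKC.
Qed.

(* The slices 0 and 1 consist of variables and boundary 1s, all Laurent units. *)
Lemma Ar_initial_units al : (al <= r.+1)%N ->
  nnl_unit (Qsys_vars r) (R al 0) /\ nnl_unit (Qsys_vars r) (R al 1).
Proof.
case: hR => R0 R1 Rbd _ _; case: al => [|al] alr.
  by rewrite !(proj1 (Rbd _)); split; apply: nnl_unit1.
case: (ltnP al r) => [ltar | ral]; last first.
  have -> : al = r by lia.
  by rewrite !(proj2 (Rbd _)); split; apply: nnl_unit1.
have lt0 : (al < r + r)%N by lia.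
have lt1 : (r + al < r + r)%N by lia.
rewrite R0 ?R1 //= -[ratfun_var _ al]/(Qsys_vars r (Ordinal lt0)).
by rewrite -[ratfun_var _ (r + al)]/(Qsys_vars r (Ordinal lt1)); split; apply: nnl_unit_var.
Qed.

Lemma Ar_forward k : nonneg_laurent _ _ (Qsys_vars r) (R 1%N (1 + k%:Z)).
Proof.
have [_ _ Rbd Rnz Rrec] := hR.
exact: Q1_nonneg_laurent Qsys_vars_neq0 Rbd Rnz Rrec Ar_initial_units k.
Qed.

(* Time reversal t |-> 1 - t maps the Q-system to a Q-system with the same
   initial variables, the two initial slices being swapped. *)
Definition R_rev (al : nat) (t : int) : ratfun (r + r) := R al (1 - t).

Lemma R_rev_rec al n : (1 <= al <= r)%N ->
  R_rev al (n + 1) * R_rev al (n - 1) =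
  R_rev al n ^+ 2 + R_rev al.+1 n * R_rev al.-1 n.
Proof.
case: hR => _ _ _ _ Rrec alr; rewrite /R_rev -Rrec // mulrC.
by congr (R _ _ * R _ _); lia.
Qed.

Lemma Ar_backward k : nonneg_laurent _ _ (Qsys_vars r) (R 1%N (- k%:Z)).
Proof.
have [_ _ Rbd Rnz _] := hR.
have R_rev_bd t : R_rev 0%N t = 1 /\ R_rev r.+1 t = 1 by apply: Rbd.
have R_rev_nz al t : (1 <= al <= r)%N -> R_rev al t != 0 by apply: Rnz.
have R_rev_units al : (al <= r.+1)%N ->
    nnl_unit (Qsys_vars r) (R_rev al 0) /\ nnl_unit (Qsys_vars r) (R_rev al 1).
  by move=> /Ar_initial_units [u0 u1]; rewrite /R_rev subr0 subrr; split.
have := Q1_nonneg_laurent Qsys_vars_neq0 R_rev_bd R_rev_nz R_rev_rec R_rev_units k.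
by rewrite /R_rev opprD addrA subrr add0r.
Qed.
End ArQsystem.

Theorem mainTheorem10 (r : nat) (hr : (1 <= r)%N)
  (R : nat -> int -> ratfun (r + r)) (hR : is_Ar_Qsystem r R) :
  forall n : int,
    nonneg_laurent (ratfun (r + r)) (r + r) (Qsys_vars r) (R 1%N n).
Proof.
move=> n; have [k [-> | ->]] := int_pos_or_nonpos n.
- exact: Ar_forward.
- exact: Ar_backward.
Qed.
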